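(* For $k\ge0$ let $\bar H_k\in\mathbb{R}^{p\times p}$ be (random) symmetric matrices with symmetric indefinite factorizations $\bar H_k=P_k^TL_kB_kL_k^TP_k$, and suppose $\bar H_k\to H(\theta^* )$ a.s., where $H(\theta^* )$ is positive definite. Let $B_k=Q_k\Lambda_kQ_k^T$ be an eigendecomposition, $\Lambda_k=\mathrm{diag}(\lambda_{k1},\dots,\lambda_{kp})$, and with a constant threshold $\underline{\tau}$ set $\bar\Lambda_k=\mathrm{diag}(\max\{\underline{\tau},|\lambda_{kj}|\})_{j=1}^p$ and $\bar{\bar H}_k=P_k^TL_kQ_k\bar\Lambda_kQ_k^TL_k^TP_k$. If $0<\underline{\tau}\le\lambda_{\min}(H(\theta^* ))/(2\bar\sigma^2)$, then there exists $K_1$ such that $\bar{\bar H}_k=\bar H_k$ for all $k>K_1$.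
   Context: In the factorization: $P_k$ permutation, $B_k$ block diagonal with symmetric $1\times1$ or $2\times2$ blocks, $L_k$ unit lower triangular with entries bounded in magnitude by a fixed constant independent of $k$. $\bar\sigma$ is a constant, independent of $k$ and the sample path, with $\sigma_{\max}(L_k)\le\bar\sigma$ for all $k$ (largest singular value). $H(\theta^* )$ is the Hessian of the loss at its minimizer $\theta^*$ and $\bar H_k$ is the running Hessian estimate of a second-order simultaneous-perturbation stochastic approximation algorithm. *)

From HB Require Import structures.
From mathcomp Require Import all_boot all_order all_algebra.
From mathcomp Require Import all_classical all_reals all_analysis.
Set Implicit Arguments. Unset Strict Implicit. Unset Printing Implicit Defensive.
Import Order.TTheory GRing.Theory Num.Theory.
Local Open Scope ring_scope.
Local Open Scope classical_set_scope.

Section Defs.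
Variable R : realType.

Definition norm2 (p : nat) (x : 'cV[R]_p) : R :=
  Num.sqrt (\sum_(i < p) x i 0 ^+ 2).

Definition sigma_max (m n : nat) (A : 'M[R]_(m, n)) : R :=
  sup [set norm2 (A *m x) | x in [set x : 'cV[R]_n | norm2 x = 1]].

Definition lambda_min (p : nat) (H : 'M[R]_p) : R :=
  inf [set a : R | eigenvalue H a].

Definition symmetric_mx (p : nat) (A : 'M[R]_p) := A^T = A.

Definition posdef_mx (p : nat) (A : 'M[R]_p) :=
  symmetric_mx A /\ forall x : 'cV[R]_p, x != 0 -> 0 < (x^T *m A *m x) 0 0.

Definition unit_lower (p : nat) (L : 'M[R]_p) :=
  (forall i : 'I_p, L i i = 1) /\ (forall i j : 'I_p, (i < j)%N -> L i j = 0).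

(* Block index of position i for a list of consecutive block sizes s. *)
Definition blk (s : seq nat) (i : nat) : nat := count (fun t => t <= i)%N (scanl addn 0%N s).

Definition block12_diag (p : nat) (B : 'M[R]_p) :=
  symmetric_mx B /\
  exists s : seq nat, all (fun b => (b == 1) || (b == 2))%N s /\ sumn s = p /\
    forall i j : 'I_p, blk s i <> blk s j -> B i j = 0.

Definition modified_H (p : nat) (tau : R) (P L Q : 'M[R]_p) (lam : 'rV[R]_p) : 'M[R]_p :=
  P^T *m L *m Q *m diag_mx (\row_j Num.max tau `|lam 0 j|) *m Q^T *m L^T *m P.

End Defs.

(* Entrywise convergence and the Rayleigh bound [x^T H x >= lambda_min H |x|^2]
   (the minimum of the form on the unit sphere is an eigenvalue) make
   [x^T Hbar_k x >= (lambda_min H / 2) |x|^2] for all large k.  Writing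
   [Hbar_k = T^T B_k T] with [T = L_k^T P_k] and [|T z| <= sigma_bar |z|], this
   gives [y^T B_k y >= lambda_min H / (2 sigma_bar^2) |y|^2 >= tau |y|^2]; for
   [y = Q_k e_j] it reads [lambda_kj >= tau], so the thresholding leaves every
   eigenvalue unchanged and the modified matrix is [Hbar_k]. *)

From HB Require Import structures.
From mathcomp Require Import all_boot all_order all_algebra.
From mathcomp Require Import all_classical all_reals all_analysis.
From mathcomp Require Import fingroup perm.
From mathcomp.algebra_tactics Require Import ring lra.
Import Order.TTheory GRing.Theory Num.Theory.
Import numFieldNormedType.Exports.
Local Open Scope ring_scope.
Local Open Scope classical_set_scope.
Set Implicit Arguments. Unset Strict Implicit. Unset Printing Implicit Defensive.

Section QuadraticForms.
Variable R : realType.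

Definition sqnorm n (x : 'cV[R]_n) : R := \sum_i x i 0 ^+ 2.

Definition qform n (H : 'M[R]_n) (x : 'cV[R]_n) : R := (x^T *m H *m x) 0 0.

Lemma sqnormE n (x : 'cV[R]_n) : (x^T *m x) 0 0 = sqnorm x.
Proof. by rewrite mxE; apply: eq_bigr => i _; rewrite mxE expr2. Qed.

Lemma sqnorm_ge0 n (x : 'cV[R]_n) : 0 <= sqnorm x.
Proof. by apply: sumr_ge0 => i _; rewrite sqr_ge0. Qed.

Lemma sqnorm_eq0 n (x : 'cV[R]_n) : (sqnorm x == 0) = (x == 0).
Proof.
apply/idP/eqP => [|->]; last by rewrite /sqnorm big1 // => i _; rewrite mxE expr0n.
rewrite psumr_eq0 => [/allP x0|i _]; last exact: sqr_ge0.
apply/matrixP => i j; rewrite ord1 mxE.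
by have /implyP/(_ isT) := x0 i (mem_index_enum i); rewrite sqrf_eq0 => /eqP.
Qed.

Lemma sqnorm0 n : sqnorm (0 : 'cV[R]_n) = 0.
Proof. by apply/eqP; rewrite sqnorm_eq0. Qed.

Lemma sqnorm_gt0 n (x : 'cV[R]_n) : (0 < sqnorm x) = (x != 0).
Proof. by rewrite lt_def sqnorm_ge0 andbT sqnorm_eq0. Qed.

Lemma sqnorm_coord n (x : 'cV[R]_n) i : x i 0 ^+ 2 <= sqnorm x.
Proof. by rewrite /sqnorm (bigD1 i) //= lerDl sumr_ge0 // => j _; rewrite sqr_ge0. Qed.

Lemma sqnormZ n a (x : 'cV[R]_n) : sqnorm (a *: x) = a ^+ 2 * sqnorm x.
Proof. by rewrite /sqnorm mulr_sumr; apply: eq_bigr => i _; rewrite mxE exprMn. Qed.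

Lemma sqnorm_normalize n (x : 'cV[R]_n) :
  x != 0 -> sqnorm ((Num.sqrt (sqnorm x))^-1 *: x) = 1.
Proof.
rewrite -sqnorm_gt0 => x0.
by rewrite sqnormZ exprVn sqr_sqrtr ?mulVf ?sqnorm_ge0 ?gt_eqF.
Qed.

Lemma sqnorm_delta n (j : 'I_n) : sqnorm (delta_mx j 0) = 1.
Proof. by rewrite -sqnormE trmx_delta mul_delta_mx mxE !eqxx. Qed.

Lemma sqnorm_isometry m n (Q : 'M[R]_(m, n)) x :
  Q^T *m Q = 1%:M -> sqnorm (Q *m x) = sqnorm x.
Proof. by move=> QQ; rewrite -!sqnormE trmx_mul mulmxA -(mulmxA _ Q^T) QQ mulmx1. Qed.

Lemma qformZ n (H : 'M[R]_n) a x : qform H (a *: x) = a ^+ 2 * qform H x.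
Proof. by rewrite /qform linearZ /= linearZ /= -!scalemxAl !mxE mulrA expr2. Qed.

Lemma qformB n (A C : 'M[R]_n) x : qform (A - C) x = qform A x - qform C x.
Proof. by rewrite /qform mulmxBr mulmxBl [X in X = _]mxE [X in _ + X = _]mxE. Qed.

Lemma qform_scalar n a (x : 'cV[R]_n) : qform a%:M x = a * sqnorm x.
Proof. by rewrite /qform mul_mx_scalar -scalemxAl mxE sqnormE. Qed.

Lemma qform_mulmx m n (B : 'M[R]_m) (T : 'M[R]_(m, n)) z :
  qform (T^T *m B *m T) z = qform B (T *m z).
Proof. by rewrite /qform trmx_mul !mulmxA. Qed.

Lemma qform_delta n (D : 'M[R]_n) j : qform D (delta_mx j 0) = D j j.
Proof. by rewrite /qform trmx_delta -rowE -colE !mxE. Qed.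

Lemma qform_lincomb n (M : 'M[R]_n) a b x y : M^T = M ->
  qform M (a *: x + b *: y) =
    a ^+ 2 * qform M x + 2 * a * b * (y^T *m M *m x) 0 0 + b ^+ 2 * qform M y.
Proof.
move=> Msym; have xMy : (x^T *m M *m y) 0 0 = (y^T *m M *m x) 0 0.
  have tr11 (A : 'M[R]_1) : A 0 0 = A^T 0 0 by rewrite mxE.
  by rewrite tr11 !trmx_mul trmxK Msym mulmxA.
rewrite /qform [(_ + _)^T]raddfD /= ![(_ *: _)^T]linearZ /= !mulmxDl !mulmxDr.
rewrite -!scalemxAl -!scalemxAr; move: xMy.
set xx := x^T *m M *m x; set xy := x^T *m M *m y.
set yx := y^T *m M *m x; set yy := y^T *m M *m y.
by rewrite !mxE => ->; ring.
Qed.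

Lemma psd_qform_eq0 n (M : 'M[R]_n) c : M^T = M -> (forall y, 0 <= qform M y) ->
  qform M c = 0 -> M *m c = 0.
Proof.
move=> Msym Mpsd Mc0; set w := M *m c.
have wMc : (w^T *m M *m c) 0 0 = sqnorm w by rewrite -mulmxA sqnormE.
(* At [(1 + w^T M w) c - |w|^2 w] the form equals [- |w|^4 (2 + w^T M w)]. *)
have := Mpsd ((qform M w + 1) *: c + (- sqnorm w) *: w).
rewrite qform_lincomb // Mc0 wMc => h.
have w2 : sqnorm w ^+ 2 * (qform M w + 2) <= 0 by lra.
have Mw2 : 0 < qform M w + 2 by have := Mpsd w; lra.
apply/eqP; rewrite -sqnorm_eq0 -sqrf_eq0 eq_le sqr_ge0 andbT.
by rewrite -(pmulr_rle0 _ Mw2) mulrC.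
Qed.

Lemma qform_min_on_sphere n (H : 'M[R]_n.+1) :
  exists2 c : 'cV[R]_n.+1, sqnorm c = 1 &
    forall y, sqnorm y = 1 -> qform H c <= qform H y.
Proof.
(* Minimize over row vectors, for which bounded_closed_compact is available. *)
pose g (v : 'rV[R]_n.+1) := sqnorm v^T.
pose f (v : 'rV[R]_n.+1) := qform H v^T.
pose S := g @^-1` [set 1].
have coord i : continuous (fun v : 'rV[R]_n.+1 => v 0 i).
  exact: @coord_continuous R 1 n.+1 0 i.
have gE v : g v = \sum_i v 0 i * v 0 i.
  by apply: eq_bigr => i _; rewrite mxE expr2.
have fE v : f v = \sum_j (\sum_i v 0 i * H i j) * v 0 j.
  rewrite /f /qform trmxK mxE; apply: eq_bigr => j _; rewrite !mxE.
  by congr (_ * _); apply: eq_bigr => i _; rewrite mxE.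
have g_cont : continuous g.
  rewrite (funext gE); apply: (continuous_big add_continuous) => i _ v.
  exact: cvgM (coord i v) (coord i v).
have f_cont : continuous f.
  rewrite (funext fE); apply: (continuous_big add_continuous) => j _ v.
  have col_cont : continuous (fun u : 'rV[R]_n.+1 => \sum_i u 0 i * H i j).
    apply: (continuous_big add_continuous) => i _ u.
    exact: cvgM (coord i u) (cvg_cst (H i j)).
  exact: cvgM (col_cont v) (coord j v).
have S_closed : closed S.
  by apply: preimage_closed => [v _|]; [exact: g_cont | exact: closed_eq].
have S_bounded : bounded_set S.
  rewrite /bounded_set /= /bounded_near; near=> M => v /= Sv.
  have v_le1 : `|v| <= 1.
    change (mx_norm v <= 1); rewrite mx_normrE; apply: bigmax_le => // -[i j] _ /=.
    have := sqnorm_coord v^T j; rewrite -/(g v) Sv ord1 mxE => vj.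
    by rewrite -(expr_le1 (n := 2)) // real_normK ?num_real.
  apply: le_trans v_le1 _; near: M; apply: nbhs_pinfty_ge; exact: num_real.
have S0 : S !=set0 by exists (delta_mx 0 0); rewrite /S /g /= trmx_delta sqnorm_delta.
have [c Sc cmin] := compact_EVT_min S0 (bounded_closed_compact S_bounded S_closed)
  (continuous_subspaceT f_cont).
exists c^T; first by move: Sc; rewrite in_setE.
move=> y y1; have := cmin y^T; rewrite /f trmxK; apply.
by rewrite in_setE /S /g /= trmxK.
Unshelve. all: by end_near.
Qed.

Lemma lambda_min_le_qform n (H : 'M[R]_n.+1) x : symmetric_mx H ->
  lambda_min H * sqnorm x <= qform H x.
Proof.
move=> Hsym; have [c c1 cmin] := qform_min_on_sphere H; set mu := qform H c.
have mu_le y : mu * sqnorm y <= qform H y.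
  have [->|y0] := eqVneq y 0; first by rewrite sqnorm0 /qform mulmx0 mxE mulr0.
  have := cmin _ (sqnorm_normalize y0).
  rewrite qformZ exprVn sqr_sqrtr ?sqnorm_ge0 // mulrC.
  by rewrite ler_pdivlMr ?sqnorm_gt0.
have Hc : H *m c = mu *: c.
  apply/eqP; rewrite -subr_eq0 -mul_scalar_mx -mulmxBl; apply/eqP.
  apply: psd_qform_eq0 => [|y|]; rewrite ?qformB ?qform_scalar.
  - by rewrite linearB /= tr_scalar_mx Hsym.
  - by rewrite subr_ge0.
  - by rewrite c1 mulr1 subrr.
have mu_eig : eigenvalue H mu.
  apply/eigenvalueP; exists c^T; first by rewrite -{1}Hsym -trmx_mul Hc linearZ.
  by rewrite trmx_eq0 -sqnorm_eq0 c1 oner_eq0.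
have mu_lb a : eigenvalue H a -> mu <= a.
  move=> /eigenvalueP [v vH v0].
  have := mu_le v^T; rewrite /qform trmxK vH -scalemxAl [X in _ <= X]mxE.
  rewrite -[v in v *m _]trmxK sqnormE.
  by rewrite ler_pM2r // sqnorm_gt0 trmx_eq0.
apply: le_trans (mu_le x); rewrite ler_wpM2r ?sqnorm_ge0 //.
by apply: ge_inf => //; exists mu => a /mu_lb.
Qed.

Lemma qform_entrywise_le n (D : 'M[R]_n) e z : (forall i j, `|D i j| <= e) ->
  `|qform D z| <= n%:R ^+ 2 * e * sqnorm z.
Proof.
move=> De; have qformE : qform D z = \sum_j \sum_i z i 0 * D i j * z j 0.
  rewrite /qform mxE; apply: eq_bigr => j _; rewrite mxE mulr_suml.
  by apply: eq_bigr => i _; rewrite mxE.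
have zz i j : `|z i 0| * `|z j 0| <= sqnorm z.
  have := sqnorm_coord z i; have := sqnorm_coord z j.
  rewrite -(real_normK (num_real (z i 0))) -(real_normK (num_real (z j 0))).
  have := normr_ge0 (z i 0); have := normr_ge0 (z j 0); nra.
rewrite qformE; apply: le_trans (ler_norm_sum _ _ _) _.
apply: le_trans (_ : \sum_(j < n) \sum_(i < n) e * sqnorm z <= _); last first.
  by rewrite !sumr_const !card_ord -mulrnA mulnn -natrX -mulrA mulr_natl.
apply: ler_sum => j _; apply: le_trans (ler_norm_sum _ _ _) _.
apply: ler_sum => i _; rewrite !normrM mulrAC mulrC.
by apply: ler_pM => //; rewrite mulr_ge0.
Qed.

Lemma cvg_qform_lower_bound n (A : nat -> 'M[R]_n.+1) (H : 'M[R]_n.+1) e :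
  (forall i j, (fun k => A k i j) @ \oo --> H i j) -> symmetric_mx H -> 0 < e ->
  \forall k \near \oo, forall z, (lambda_min H - e) * sqnorm z <= qform (A k) z.
Proof.
move=> AH Hsym e0; set d := e / n.+1%:R ^+ 2.
have d0 : 0 < d by rewrite divr_gt0 // exprn_gt0.
have close : \forall k \near \oo, forall i j, `|H i j - A k i j| < d.
  apply: filter_forall => i; apply: filter_forall => j.
  by move/cvgrPdist_lt: (AH i j) => /(_ d d0).
apply: filterS close => k close z.
have : `|qform (A k - H) z| <= e * sqnorm z.
  have -> : e = n.+1%:R ^+ 2 * d by rewrite /d mulrC divfK // expf_neq0 // pnatr_eq0.
  by apply: qform_entrywise_le => i j; rewrite !mxE distrC ltW.
rewrite qformB ler_norml => /andP[low _].
have := lambda_min_le_qform z Hsym; lra.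
Qed.

Lemma sqnorm_mulmx_le m n (A : 'M[R]_(m, n)) s x : sigma_max A <= s ->
  sqnorm (A *m x) <= s ^+ 2 * sqnorm x.
Proof.
move=> As; have [->|x0] := eqVneq x 0; first by rewrite mulmx0 !sqnorm0 mulr0.
set S := [set norm2 (A *m y) | y in [set y : 'cV[R]_n | norm2 y = 1]].
have S_ub : has_ubound S.
  exists (Num.sqrt (\sum_i (\sum_j `|A i j|) ^+ 2)) => _ [y /= y1 <-].
  rewrite /norm2 ler_sqrt ?sumr_ge0 // => [|i _]; last exact: sqr_ge0.
  apply: ler_sum => i _.
  have Ay : `|(A *m y) i 0| <= \sum_j `|A i j|.
    rewrite mxE; apply: le_trans (ler_norm_sum _ _ _) _; apply: ler_sum => j _.
    rewrite normrM ler_piMr //.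
    have := sqnorm_coord y j; rewrite -(sqr_sqrtr (sqnorm_ge0 y)) -/(norm2 y) y1 expr1n.
    by rewrite -(expr_le1 (n := 2)) // real_normK ?num_real.
  by rewrite -real_normK ?num_real // !expr2 ler_pM.
set y := (Num.sqrt (sqnorm x))^-1 *: x.
have y1 : norm2 y = 1 by rewrite /norm2 -/(sqnorm y) sqnorm_normalize ?sqrtr1.
have Ay_le : norm2 (A *m y) <= s.
  apply: le_trans As; apply: sup_upper_bound; last by exists y.
  by split => //; exists (norm2 (A *m y)), y.
have : sqnorm (A *m y) <= s ^+ 2.
  by rewrite -(sqr_sqrtr (sqnorm_ge0 _)) !expr2 ler_pM ?sqrtr_ge0.
rewrite /y -scalemxAr sqnormZ exprVn sqr_sqrtr ?sqnorm_ge0 // mulrC.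
by rewrite ler_pdivrMr ?sqnorm_gt0 // mulrC.
Qed.

Lemma sqnorm_trmx_mulmx_le m n (A : 'M[R]_(m, n)) c : 0 < c ->
  (forall x, sqnorm (A *m x) <= c * sqnorm x) ->
  forall w, sqnorm (A^T *m w) <= c * sqnorm w.
Proof.
move=> c0 Ale w; set u := A^T *m w.
have uAw : ((A *m u)^T *m 1%:M *m w) 0 0 = sqnorm u.
  by rewrite mulmx1 trmx_mul -mulmxA sqnormE.
(* [|u|^2 = w^T A u], and expanding [0 <= |c w - A u|^2] bounds it. *)
have := qform_scalar 1 (c *: w + (-1) *: (A *m u)).
rewrite qform_lincomb ?trmx1 // uAw !qform_scalar !mul1r => h.
have := Ale u; have := sqnorm_ge0 (c *: w + (-1) *: (A *m u)); nra.
Qed.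

Lemma unit_lower_unitmx n (L : 'M[R]_n) : unit_lower L -> L \in unitmx.
Proof.
move=> [L1 L0]; have L_trig : is_trig_mx L.
  by apply/forallP => i; apply/forallP => j; apply/implyP => /L0 ->.
by rewrite unitmxE det_trig // big1 ?unitr1.
Qed.

Lemma perm_mx_orthogonal n (P : 'M[R]_n) : is_perm_mx P -> P^T *m P = 1%:M.
Proof. by case/is_perm_mxP => s ->; rewrite tr_perm_mx -perm_mxM mulVg perm_mx1. Qed.

Lemma qform_congr_lower_bound n (T B : 'M[R]_n) c m :
  T \in unitmx -> 0 <= c -> 0 <= m ->
  (forall z, sqnorm (T *m z) <= c * sqnorm z) ->
  (forall z, m * sqnorm z <= qform (T^T *m B *m T) z) ->
  forall y, m * sqnorm y <= c * qform B y.
Proof.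
move=> Tu c0 m0 Tle Ale y; have <- : T *m (invmx T *m y) = y by rewrite mulKVmx.
rewrite -qform_mulmx; set z := invmx T *m y.
by apply: le_trans (ler_wpM2l c0 (Ale z)); rewrite mulrCA ler_wpM2l.
Qed.

Lemma qform_eigenvector n (Q : 'M[R]_n) (lam : 'rV[R]_n) j : Q^T *m Q = 1%:M ->
  qform (Q *m diag_mx lam *m Q^T) (Q *m delta_mx j 0) = lam 0 j.
Proof.
move=> QQ; rewrite -[Q in Q *m diag_mx _]trmxK qform_mulmx mulmxA QQ mul1mx.
by rewrite qform_delta mxE eqxx mulr1n.
Qed.

Lemma factored_eigenvalue_lower_bound n (P L Q : 'M[R]_n) (lam : 'rV[R]_n) s m :
  is_perm_mx P -> unit_lower L -> sigma_max L <= s -> s != 0 ->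
  Q^T *m Q = 1%:M -> 0 <= m ->
  (forall z, m * sqnorm z <= qform (P^T *m L *m (Q *m diag_mx lam *m Q^T) *m L^T *m P) z) ->
  forall j, m <= s ^+ 2 * lam 0 j.
Proof.
move=> Pperm Lunit Ls s0 QQ m0 Hle j.
have s2_gt0 : 0 < s ^+ 2 by rewrite exprn_even_gt0.
have LT_le := sqnorm_trmx_mulmx_le s2_gt0 (fun x => sqnorm_mulmx_le x Ls).
have T_le z : sqnorm (L^T *m P *m z) <= s ^+ 2 * sqnorm z.
  by rewrite -mulmxA (le_trans (LT_le _)) // sqnorm_isometry ?perm_mx_orthogonal.
have := qform_congr_lower_bound (B := Q *m diag_mx lam *m Q^T) _ (sqr_ge0 s) m0 T_le.
move=> /(_ _ _ (Q *m delta_mx j 0)).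
rewrite sqnorm_isometry // sqnorm_delta mulr1 qform_eigenvector //; apply.
- case: (mulmx1_unit (perm_mx_orthogonal Pperm)) => _ Pu.
  by rewrite unitmx_mul unitmx_tr Pu andbT unit_lower_unitmx.
- by move=> z; have := Hle z; rewrite trmx_mul trmxK !mulmxA.
Qed.

Lemma modified_H_id n tau (P L Q : 'M[R]_n) (lam : 'rV[R]_n) :
  0 <= tau -> (forall j, tau <= lam 0 j) ->
  modified_H tau P L Q lam = P^T *m L *m (Q *m diag_mx lam *m Q^T) *m L^T *m P.
Proof.
move=> tau0 tau_le; rewrite /modified_H; have -> : \row_j Num.max tau `|lam 0 j| = lam.
  by apply/rowP => j; rewrite mxE ger0_norm ?(le_trans tau0) // max_r.
by rewrite !mulmxA.
Qed.

End QuadraticForms.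

Theorem theoremA3 (R : realType) (p : nat)
  (Hbar : nat -> 'M[R]_p) (Hstar : 'M[R]_p)
  (P L B Q : nat -> 'M[R]_p) (lam : nat -> 'rV[R]_p)
  (sigma_bar tau : R) :
  (forall k, symmetric_mx (Hbar k)) ->
  (forall k, is_perm_mx (P k)) ->
  (forall k, unit_lower (L k)) ->
  (exists c : R, forall k (i j : 'I_p), `|L k i j| <= c) ->
  (forall k, sigma_max (L k) <= sigma_bar) ->
  (forall k, block12_diag (B k)) ->
  (forall k, Hbar k = (P k)^T *m L k *m B k *m (L k)^T *m P k) ->
  (forall i j : 'I_p, (fun k => Hbar k i j : R) @ \oo --> (Hstar i j : R)) ->
  posdef_mx Hstar ->
  (forall k, (Q k)^T *m Q k = 1%:M) ->
  (forall k, B k = Q k *m diag_mx (lam k) *m (Q k)^T) ->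
  0 < tau -> tau <= lambda_min Hstar / (2 * sigma_bar ^+ 2) ->
  exists K1 : nat, forall k : nat, (K1 < k)%N ->
    modified_H tau (P k) (L k) (Q k) (lam k) = Hbar k.
Proof.
move=> _ Pperm Lunit _ Ls _ Hfac Hcvg [Hsym _] QQ BQ tau_gt0 tau_le.
case: p => [|n] in Hbar Hstar P L B Q lam Pperm Lunit Ls Hfac Hcvg Hsym QQ BQ tau_le *.
  by exists 0%N => k _; apply/matrixP => -[].
set lmin := lambda_min Hstar in tau_le *.
have s_neq0 : sigma_bar != 0.
  by apply: contraTneq tau_le => ->; rewrite expr0n mulr0 invr0 mulr0 -ltNge.
have s2_gt0 : 0 < sigma_bar ^+ 2 by rewrite exprn_even_gt0.
have lmin_ge : tau * (2 * sigma_bar ^+ 2) <= lmin by rewrite -ler_pdivlMr // pmulr_rgt0.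
have lmin_gt0 : 0 < lmin.
  by apply: lt_le_trans lmin_ge; rewrite mulr_gt0 // mulr_gt0.
have [K _ HK] := cvg_qform_lower_bound Hcvg Hsym (divr_gt0 lmin_gt0 (ltr0Sn _ 1)).
exists K => k /ltnW /HK Hk.
have lam_ge j : tau <= lam k 0 j.
  have half_ge0 : 0 <= lmin - lmin / 2 by lra.
  have := factored_eigenvalue_lower_bound (lam := lam k) (Pperm k) (Lunit k) (Ls k)
    s_neq0 (QQ k) half_ge0.
  rewrite -BQ -Hfac => /(_ Hk j); nra.
by rewrite modified_H_id ?(ltW tau_gt0) // -BQ -Hfac.
Qed.
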